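(* Let $S$ be a subset with $\mathbb{R}\times[0,1)\subset S\subset\mathbb{R}\times[0,1]$ which is open in $\mathbb{R}\times[0,1]$. Then there exist a set $S'$ and a homeomorphism $h:S\to S'$ such that: (1) $\mathbb{R}\times[0,1)\subset S'\subset S\subset\mathbb{R}\times[0,1]$; (2) the connected components of $S'\cap(\mathbb{R}\times\{1\})$ have closures which are bounded in $\mathbb{R}^2$ and mutually disjoint; (3) $h$ is the identity on $\mathbb{R}\times\{0\}$; (4) $h$ preserves the second coordinate, i.e. $h(x,y)=(h_1(x,y),y)$ for all $(x,y)\in S$ (in particular $h$ maps horizontal leaves to horizontal leaves). *)

From Stdlib Require Import Reals.
Open Scope R_scope.

Definition pt : Type := (R * R)%type.

Definition dist2 (p q : pt) : R :=
  sqrt ((fst p - fst q)^2 + (snd p - snd q)^2).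

Definition rel_open (A U : pt -> Prop) : Prop :=
  (forall p, U p -> A p) /\
  forall p, U p -> exists eps, eps > 0 /\
    forall q, A q -> dist2 p q < eps -> U q.

Definition strip (p : pt) : Prop := 0 <= snd p <= 1.

Definition continuous_on (A : pt -> Prop) (f : pt -> pt) : Prop :=
  forall p, A p -> forall eps, eps > 0 -> exists delta, delta > 0 /\
    forall q, A q -> dist2 p q < delta -> dist2 (f p) (f q) < eps.

(* h : A -> B is a homeomorphism (h, g represented as total functions
   whose relevant behaviour is on A, resp. B) *)
Definition homeomorphism (A B : pt -> Prop) (h : pt -> pt) : Prop :=
  (forall p, A p -> B (h p)) /\
  exists g : pt -> pt,
    (forall q, B q -> A (g q)) /\
    (forall p, A p -> g (h p) = p) /\
    (forall q, B q -> h (g q) = q) /\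
    continuous_on A h /\ continuous_on B g.

Definition connected (C : pt -> Prop) : Prop :=
  forall U V, rel_open C U -> rel_open C V ->
    (forall p, C p -> U p \/ V p) ->
    (exists p, U p) -> (exists p, V p) ->
    exists p, U p /\ V p.

Definition component (A C : pt -> Prop) : Prop :=
  (exists p, C p) /\ (forall p, C p -> A p) /\ connected C /\
  forall D, connected D -> (forall p, D p -> A p) ->
    (exists p, D p /\ C p) -> forall p, D p -> C p.

Definition closure2 (A : pt -> Prop) (p : pt) : Prop :=
  forall eps, eps > 0 -> exists q, A q /\ dist2 p q < eps.

Definition bounded2 (A : pt -> Prop) : Prop :=
  exists M, forall p, A p -> dist2 (0, 0) p <= M.

(** In the coordinate [squash x = x / (1 + |x|)] the complement [K] of the top
    edge of [S] is a closed subset of [R] containing [(-oo, -1] ∪ [1, +oo)], so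
    every point of the top edge lies in a bounded gap [(a, b)] of [K].  On level
    [y] the homeomorphism moves each point of a gap inside that gap by an
    increasing map that fixes [a] and [b], is the identity for [y = 0] and has
    Lipschitz constant [1 / (1 - y)] (this gives continuity at the points of [K]);
    at [y = 1] it is the affine contraction of the gap onto its middle third.
    The top edge of the image is therefore the union of the middle thirds of the
    gaps, whose closures are compact and lie in the pairwise disjoint gaps. *)

From Stdlib Require Import Reals Lra Psatz Classical ClassicalEpsilon.
From Coquelicot Require Import Rcomplements.
From Coquelicot Require Coquelicot.
Open Scope R_scope.

Definition closedR (K : R -> Prop) : Prop :=
  forall v, ~ K v -> exists e, e > 0 /\ forall z, Rabs (z - v) < e -> ~ K z.

Definition gap_lo (K : R -> Prop) (u : R) : R :=
  epsilon (inhabits 0) (is_lub (fun v => v <= u /\ K v)).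

Definition reflect (K : R -> Prop) (v : R) : Prop := K (- v).

Definition gap_hi (K : R -> Prop) (u : R) : R := - gap_lo (reflect K) (- u).

Section GapLo.
Variable K : R -> Prop.
Hypothesis K_closed : closedR K.
Hypothesis K_unbounded_below : forall u, exists v, v <= u /\ K v.

Lemma gap_lo_lub u : is_lub (fun v => v <= u /\ K v) (gap_lo K u).
Proof.
  unfold gap_lo. apply epsilon_spec.
  destruct (K_unbounded_below u) as [v Kv].
  assert (Hb : bound (fun v => v <= u /\ K v)) by (exists u; intros z [Hz _]; exact Hz).
  destruct (completeness _ Hb (ex_intro _ v Kv)) as [m Hm]. exists m; exact Hm.
Qed.

Lemma gap_lo_le u : gap_lo K u <= u.
Proof. apply (gap_lo_lub u). intros v [Hv _]; exact Hv. Qed.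

Lemma le_gap_lo u v : K v -> v <= u -> v <= gap_lo K u.
Proof. intros Kv Hvu. apply (gap_lo_lub u). split; assumption. Qed.

Lemma gap_lo_in u : K (gap_lo K u).
Proof.
  set (a := gap_lo K u).
  apply NNPP; intro Ka. destruct (K_closed a Ka) as [e [He HKe]].
  assert (Hub : is_upper_bound (fun v => v <= u /\ K v) (a - e / 2)).
  { intros v [Hvu Kv]. apply Rnot_lt_le; intro Hlt.
    pose proof (le_gap_lo u v Kv Hvu).
    apply (HKe v); [apply Rabs_def1; unfold a in *; lra | exact Kv]. }
  pose proof (proj2 (gap_lo_lub u) _ Hub) as Ha. unfold a in *. lra.
Qed.

Lemma gap_lo_eq u m : K m -> m <= u -> (forall z, m < z <= u -> ~ K z) -> gap_lo K u = m.
Proof.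
  intros Km Hmu Hfree.
  pose proof (le_gap_lo u m Km Hmu) as [Hlt|]; [|easy].
  exfalso. apply (Hfree (gap_lo K u)); [split; [exact Hlt | apply gap_lo_le] | apply gap_lo_in].
Qed.

End GapLo.

Section Gap.
Variable K : R -> Prop.
Hypothesis K_closed : closedR K.
Hypothesis K_unbounded_below : forall u, exists v, v <= u /\ K v.
Hypothesis K_unbounded_above : forall u, exists v, u <= v /\ K v.

Lemma reflect_closed : closedR (reflect K).
Proof.
  intros v Kv. destruct (K_closed _ Kv) as [e [He HKe]].
  exists e; split; [exact He|]. intros z Hz. apply HKe.
  replace (- z - - v) with (- (z - v)) by ring. rewrite Rabs_Ropp; exact Hz.
Qed.

Lemma reflect_unbounded_below u : exists v, v <= u /\ reflect K v.
Proof.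
  destruct (K_unbounded_above (- u)) as [v [Hv Kv]].
  exists (- v); split; [lra|]. unfold reflect; rewrite Ropp_involutive; exact Kv.
Qed.

Lemma gap_hi_ge u : u <= gap_hi K u.
Proof. pose proof (gap_lo_le (reflect K) reflect_unbounded_below (- u)). unfold gap_hi; lra. Qed.

Lemma gap_hi_le u v : K v -> u <= v -> gap_hi K u <= v.
Proof.
  intros Kv Huv. unfold gap_hi.
  assert (Kv' : reflect K (- v)) by (unfold reflect; rewrite Ropp_involutive; exact Kv).
  pose proof (le_gap_lo (reflect K) reflect_unbounded_below (- u) (- v) Kv'). lra.
Qed.

Lemma gap_hi_in u : K (gap_hi K u).
Proof. exact (gap_lo_in (reflect K) reflect_closed reflect_unbounded_below (- u)). Qed.

Lemma gap_hi_eq u m : K m -> u <= m -> (forall z, u <= z < m -> ~ K z) -> gap_hi K u = m.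
Proof.
  intros Km Hum Hfree. unfold gap_hi.
  rewrite (gap_lo_eq (reflect K) reflect_closed reflect_unbounded_below (- u) (- m)).
  - ring.
  - unfold reflect; rewrite Ropp_involutive; exact Km.
  - lra.
  - intros z Hz. apply Hfree. lra.
Qed.

Lemma gap_in_K u : K u -> gap_lo K u = u /\ gap_hi K u = u.
Proof.
  intro Ku. pose proof (gap_lo_le K K_unbounded_below u).
  pose proof (le_gap_lo K K_unbounded_below u u Ku (Rle_refl u)).
  pose proof (gap_hi_ge u). pose proof (gap_hi_le u u Ku (Rle_refl u)). lra.
Qed.

Lemma gap_notin_K u : ~ K u -> gap_lo K u < u < gap_hi K u.
Proof.
  intro Ku. split.
  - destruct (gap_lo_le K K_unbounded_below u) as [|Heq]; [assumption|].
    exfalso; apply Ku; rewrite <- Heq; apply gap_lo_in; assumption.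
  - destruct (gap_hi_ge u) as [|Heq]; [assumption|].
    exfalso; apply Ku; rewrite Heq; apply gap_hi_in.
Qed.

Lemma gap_free u z : gap_lo K u < z < gap_hi K u -> ~ K z.
Proof.
  intros Hz Kz. destruct (Rle_dec z u).
  - pose proof (le_gap_lo K K_unbounded_below u z Kz r). lra.
  - pose proof (gap_hi_le u z Kz ltac:(lra)). lra.
Qed.

Lemma gap_same u z : gap_lo K u < z < gap_hi K u ->
  gap_lo K z = gap_lo K u /\ gap_hi K z = gap_hi K u.
Proof.
  intro Hz. split.
  - apply (gap_lo_eq K K_closed K_unbounded_below);
      [apply gap_lo_in; assumption | lra |].
    intros t Ht. apply (gap_free u). lra.
  - apply gap_hi_eq; [apply gap_hi_in | lra |].
    intros t Ht. apply (gap_free u). lra.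
Qed.

Lemma gap_outside u z : K z -> z <= gap_lo K u \/ gap_hi K u <= z.
Proof.
  intro Kz. destruct (Rle_dec z (gap_lo K u)) as [|Hlo]; [now left|].
  destruct (Rle_dec (gap_hi K u) z) as [|Hhi]; [now right|].
  exfalso. apply (gap_free u z); [lra | exact Kz].
Qed.

End Gap.

Lemma affine_le_iff a b x y : a > 0 -> (a * x + b <= y <-> x <= (y - b) / a).
Proof.
  intro Ha. unfold Rdiv. split; intro H.
  - apply (Rmult_le_reg_r a); [exact Ha|]. rewrite Rmult_assoc, Rinv_l by lra. lra.
  - apply (Rmult_le_compat_r a) in H; [|lra]. rewrite Rmult_assoc, Rinv_l in H by lra. lra.
Qed.

Definition maxmin3 a1 b1 a2 b2 a3 b3 x := Rmax (Rmin (a1 * x + b1) (a2 * x + b2)) (a3 * x + b3).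
Definition minmax3 a1 b1 a2 b2 a3 b3 y :=
  Rmin (Rmax ((y - b1) / a1) ((y - b2) / a2)) ((y - b3) / a3).

Section MaxMin3.
Variables a1 b1 a2 b2 a3 b3 : R.
Hypotheses (a1_pos : a1 > 0) (a2_pos : a2 > 0) (a3_pos : a3 > 0).
Let F := maxmin3 a1 b1 a2 b2 a3 b3.
Let G := minmax3 a1 b1 a2 b2 a3 b3.

Lemma maxmin3_le_iff x y : F x <= y <-> x <= G y.
Proof.
  unfold F, G, maxmin3, minmax3.
  pose proof (affine_le_iff a1 b1 x y a1_pos). pose proof (affine_le_iff a2 b2 x y a2_pos).
  pose proof (affine_le_iff a3 b3 x y a3_pos).
  unfold Rmax, Rmin; repeat destruct Rle_dec; tauto || lra.
Qed.

Lemma maxmin3_increasing x y : x < y -> F x < F y.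
Proof. intro H. unfold F, maxmin3, Rmax, Rmin; repeat destruct Rle_dec; nra. Qed.

Lemma minmax3_increasing x y : x < y -> G x < G y.
Proof.
  intro H. unfold G, minmax3.
  assert (Hdiv : forall a b, a > 0 -> (x - b) / a < (y - b) / a).
  { intros a b Ha. unfold Rdiv. apply Rmult_lt_compat_r; [apply Rinv_0_lt_compat|]; lra. }
  pose proof (Hdiv a1 b1 a1_pos). pose proof (Hdiv a2 b2 a2_pos). pose proof (Hdiv a3 b3 a3_pos).
  unfold Rmax, Rmin; repeat destruct Rle_dec; lra.
Qed.

Lemma minmax3_maxmin3 x : G (F x) = x.
Proof.
  assert (Hle : x <= G (F x)) by (apply maxmin3_le_iff; lra).
  destruct Hle as [Hlt|]; [exfalso|easy].
  assert (F (G (F x)) <= F x) by (apply maxmin3_le_iff; lra).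
  pose proof (maxmin3_increasing _ _ Hlt). lra.
Qed.

Lemma maxmin3_minmax3 y : F (G y) = y.
Proof.
  assert (Hle : F (G y) <= y) by (apply maxmin3_le_iff; lra).
  destruct Hle as [Hlt|]; [exfalso|easy].
  assert (G y <= G (F (G y))) by (apply maxmin3_le_iff; lra).
  pose proof (minmax3_increasing _ _ Hlt). lra.
Qed.

End MaxMin3.

(** For [s < 1], [pinch s w] is an increasing bijection of [[0, w]] fixing [0]
    and [w], of slope [1 / (1 - s)] near the ends; its middle piece interpolates
    between the identity ([s = 0]) and the contraction onto the middle third,
    which is [pinch 1 w].  [unpinch] is its inverse, written without
    [1 / (1 - s)] so that it stays continuous at [s = 1]. *)
Definition pinch (s w L : R) : R :=
  if Rlt_dec s 1
  then maxmin3 (/ (1 - s)) 0 (1 - 2 * s / 3) (s * w / 3) (/ (1 - s)) (w - / (1 - s) * w) L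
  else (L + w) / 3.

Definition unpinch (s w L : R) : R :=
  Rmin (Rmax ((1 - s) * L) ((L - s * w / 3) / (1 - 2 * s / 3))) (w - (1 - s) * (w - L)).

Lemma inv_one_minus s : 0 <= s < 1 -> / (1 - s) >= 1 /\ / (1 - s) * (1 - s) = 1.
Proof.
  intro H. assert (0 < / (1 - s)) by (apply Rinv_0_lt_compat; lra).
  assert (Hk : / (1 - s) * (1 - s) = 1) by (field; lra). split; [nra | exact Hk].
Qed.

Lemma pinch_lt1 s w L : s < 1 ->
  pinch s w L = Rmax (Rmin (/ (1 - s) * L) ((1 - 2 * s / 3) * L + s * w / 3))
                     (w - / (1 - s) * (w - L)).
Proof.
  intro H. unfold pinch, maxmin3. destruct Rlt_dec; [|lra].
  f_equal; [f_equal|]; ring.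
Qed.

Lemma pinch_1 w L : pinch 1 w L = (L + w) / 3.
Proof. unfold pinch. destruct Rlt_dec; [lra | reflexivity]. Qed.

Lemma pinch_level0 w L : pinch 0 w L = L.
Proof.
  rewrite pinch_lt1 by lra. rewrite Rminus_0_r, Rinv_1.
  unfold Rmax, Rmin; repeat destruct Rle_dec; lra.
Qed.

Lemma pinch_zero_width s : s < 1 -> pinch s 0 0 = 0.
Proof. intro H. rewrite pinch_lt1 by exact H. unfold Rmax, Rmin; repeat destruct Rle_dec; lra. Qed.

Lemma pinch_bounds s w L : 0 <= s < 1 -> 0 <= L <= w ->
  0 <= pinch s w L /\ pinch s w L <= / (1 - s) * L /\
  pinch s w L <= w /\ w - pinch s w L <= / (1 - s) * (w - L).
Proof.
  intros Hs HL. rewrite pinch_lt1 by lra. destruct (inv_one_minus s Hs) as [Hk1 Hk2].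
  set (k := / (1 - s)) in *.
  replace ((1 - 2 * s / 3) * L) with (L - 2/3 * (s * L)) by field.
  assert (k * L >= L) by nra. assert (k * (w - L) >= w - L) by nra.
  assert (0 <= s * L <= s * w) by (split; nra). assert (s * w <= w) by nra.
  assert (s * L <= L) by nra. assert (w - L - 2/3 * (s * w) + 2/3 * (s * L) >= 0) by nra.
  unfold Rmax, Rmin; repeat destruct Rle_dec; repeat split; lra.
Qed.

Lemma pinch_inside s w L : 0 <= s <= 1 -> 0 < L < w -> 0 < pinch s w L < w.
Proof.
  intros Hs HL. destruct (Rlt_dec s 1) as [Hs1|Hs1]; [|rewrite (Rle_antisym s 1), pinch_1; lra].
  rewrite pinch_lt1 by exact Hs1. destruct (inv_one_minus s ltac:(lra)) as [Hk1 Hk2].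
  set (k := / (1 - s)) in *.
  replace ((1 - 2 * s / 3) * L) with (L - 2/3 * (s * L)) by field.
  assert (k * L >= L) by nra. assert (k * (w - L) >= w - L) by nra.
  assert (0 <= s * L <= s * w) by (split; nra). assert (s * w <= w) by nra.
  assert (s * L <= L) by nra. assert (w - L - 2/3 * (s * w) + 2/3 * (s * L) > 0) by nra.
  unfold Rmax, Rmin; repeat destruct Rle_dec; repeat split; lra.
Qed.

Lemma pinch_middle s w L : 0 <= s < 1 -> 0 < L < w ->
  / (1 - s) * L >= L + w / 3 -> / (1 - s) * (w - L) >= w ->
  pinch s w L = (1 - 2 * s / 3) * L + s * w / 3.
Proof.
  intros Hs HL Hlo Hhi. rewrite pinch_lt1 by lra.
  assert (0 <= s * L <= L) by (split; nra). assert (s * w <= w) by nra.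
  unfold Rmax, Rmin; repeat destruct Rle_dec; nra.
Qed.

Lemma unpinch_zero_width s : 0 <= s <= 1 -> unpinch s 0 0 = 0.
Proof.
  intro H. unfold unpinch.
  replace ((0 - s * 0 / 3) / (1 - 2 * s / 3)) with 0 by (field; lra).
  unfold Rmax, Rmin; repeat destruct Rle_dec; lra.
Qed.

Lemma unpinch_bounds s w L : 0 <= s <= 1 -> 0 <= L <= w ->
  0 <= unpinch s w L /\ unpinch s w L <= 3 * L /\
  unpinch s w L <= w /\ w - unpinch s w L <= 3 * (w - L).
Proof.
  intros Hs HL. unfold unpinch.
  set (B := (L - s * w / 3) / (1 - 2 * s / 3)).
  assert (HB : (1 - 2 * s / 3) * B = L - s * w / 3) by (unfold B; field; lra).
  assert (0 <= (1 - s) * L <= L) by (split; nra).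
  assert (0 <= (1 - s) * (w - L) <= w - L) by (split; nra).
  assert (B <= 3 * L) by nra. assert (B >= 3 * L - 2 * w) by nra.
  unfold Rmax, Rmin; repeat destruct Rle_dec; repeat split; lra.
Qed.

Lemma unpinch_inside s w L : 0 <= s < 1 -> 0 < L < w -> 0 < unpinch s w L < w.
Proof.
  intros Hs HL. unfold unpinch.
  assert (0 < (1 - s) * L) by nra. assert (0 < (1 - s) * (w - L) <= w - L) by (split; nra).
  unfold Rmax, Rmin; repeat destruct Rle_dec; repeat split; lra.
Qed.

Lemma unpinch_1_middle w L : w / 3 < L < 2 * w / 3 -> unpinch 1 w L = 3 * L - w.
Proof.
  intro H. unfold unpinch.
  replace ((L - 1 * w / 3) / (1 - 2 * 1 / 3)) with (3 * L - w) by field.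
  unfold Rmax, Rmin; repeat destruct Rle_dec; lra.
Qed.

Lemma unpinch_minmax3 s w L : 0 <= s < 1 ->
  unpinch s w L = minmax3 (/ (1 - s)) 0 (1 - 2 * s / 3) (s * w / 3) (/ (1 - s)) (w - / (1 - s) * w) L.
Proof. intro H. unfold unpinch, minmax3. f_equal; [f_equal|]; field; lra. Qed.

Lemma unpinch_pinch s w L : 0 <= s <= 1 -> 0 < L < w -> unpinch s w (pinch s w L) = L.
Proof.
  intros Hs HL. destruct (Rlt_dec s 1) as [Hs1|Hs1].
  - destruct (inv_one_minus s ltac:(lra)) as [Hk _].
    rewrite unpinch_minmax3 by lra. unfold pinch; destruct Rlt_dec; [|lra].
    apply minmax3_maxmin3; lra.
  - rewrite (Rle_antisym s 1), pinch_1, unpinch_1_middle by lra. field.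
Qed.

Lemma pinch_unpinch s w L : 0 <= s < 1 -> pinch s w (unpinch s w L) = L.
Proof.
  intro Hs. destruct (inv_one_minus s Hs) as [Hk _].
  rewrite unpinch_minmax3 by exact Hs. unfold pinch; destruct Rlt_dec; [|lra].
  apply maxmin3_minmax3; lra.
Qed.

Definition squash (x : R) : R := x / (1 + Rabs x).
Definition unsquash (v : R) : R := v / (1 - Rabs v).

Lemma squash_range x : -1 < squash x < 1.
Proof.
  enough (H : Rabs (squash x) < 1) by (apply Rabs_def2 in H; lra).
  unfold squash. pose proof (Rabs_pos x).
  rewrite Rabs_div by lra. rewrite (Rabs_right (1 + Rabs x)) by lra.
  apply (Rmult_lt_reg_r (1 + Rabs x)); [lra|].
  unfold Rdiv; rewrite Rmult_assoc, Rinv_l by lra. lra.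
Qed.

Lemma unsquash_squash x : unsquash (squash x) = x.
Proof.
  unfold unsquash, squash. pose proof (Rabs_pos x).
  rewrite Rabs_div by lra. rewrite (Rabs_right (1 + Rabs x)) by lra.
  replace (1 - Rabs x / (1 + Rabs x)) with (/ (1 + Rabs x)) by (field; lra).
  field; lra.
Qed.

Lemma squash_unsquash v : -1 < v < 1 -> squash (unsquash v) = v.
Proof.
  intros [H1 H2]. assert (H : Rabs v < 1) by (apply Rabs_def1; lra). unfold unsquash, squash. pose proof (Rabs_pos v).
  rewrite Rabs_div by lra. rewrite (Rabs_right (1 - Rabs v)) by lra.
  replace (1 + Rabs v / (1 - Rabs v)) with (/ (1 - Rabs v)) by (field; lra).
  field; lra.
Qed.

Lemma squash_le x y : x <= y -> squash x <= squash y.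
Proof.
  intro H. unfold squash.
  pose proof (Rabs_pos x). pose proof (Rabs_pos y).
  apply (Rmult_le_reg_r ((1 + Rabs x) * (1 + Rabs y))); [nra|].
  replace (x / (1 + Rabs x) * ((1 + Rabs x) * (1 + Rabs y))) with (x * (1 + Rabs y))
    by (field; lra).
  replace (y / (1 + Rabs y) * ((1 + Rabs x) * (1 + Rabs y))) with (y * (1 + Rabs x))
    by (field; lra).
  unfold Rabs; destruct (Rcase_abs x), (Rcase_abs y); nra.
Qed.

Lemma squash_lipschitz x y : Rabs (squash x - squash y) <= Rabs (x - y).
Proof.
  unfold squash. pose proof (Rabs_pos x). pose proof (Rabs_pos y).
  replace (x / (1 + Rabs x) - y / (1 + Rabs y)) with
    ((x * (1 + Rabs y) - y * (1 + Rabs x)) / ((1 + Rabs x) * (1 + Rabs y))) by (field; lra).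
  rewrite Rabs_div by nra. rewrite (Rabs_right ((1 + Rabs x) * (1 + Rabs y))) by nra.
  apply (Rmult_le_reg_r ((1 + Rabs x) * (1 + Rabs y))); [nra|].
  unfold Rdiv; rewrite Rmult_assoc, Rinv_l, Rmult_1_r by nra.
  apply Rabs_le.
  assert (H1 : 0 <= Rabs x * Rabs y) by (apply Rmult_le_pos; apply Rabs_pos).
  assert (H2 : 0 <= Rabs x * Rabs y * Rabs (x - y)) by (apply Rmult_le_pos; [exact H1 | apply Rabs_pos]).
  revert H1 H2.
  destruct (Rcase_abs x) as [hx|hx]; [rewrite (Rabs_left x hx) | rewrite (Rabs_right x hx)];
  destruct (Rcase_abs y) as [hy|hy]; [rewrite (Rabs_left y hy) | rewrite (Rabs_right y hy)
                                     | rewrite (Rabs_left y hy) | rewrite (Rabs_right y hy)];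
  destruct (Rcase_abs (x - y)) as [h|h];
  first [rewrite (Rabs_left _ h) | rewrite (Rabs_right _ h)]; intros; split; nra.
Qed.

Lemma abs_le_of_squash x c : Rabs (squash x) <= c -> c < 1 -> Rabs x <= c / (1 - c).
Proof.
  intros H Hc. unfold squash in H. pose proof (Rabs_pos x).
  rewrite Rabs_div in H by lra. rewrite (Rabs_right (1 + Rabs x)) in H by lra.
  apply (Rmult_le_reg_r (1 - c)); [lra|].
  unfold Rdiv; rewrite Rmult_assoc, Rinv_l by lra.
  assert (Rabs x <= c * (1 + Rabs x)).
  { apply (Rmult_le_reg_r (/ (1 + Rabs x))); [apply Rinv_0_lt_compat; lra|].
    rewrite Rmult_assoc, Rinv_r by lra. lra. }
  lra.
Qed.

Definition level_continuous_at (F : R -> R -> R) (s0 u0 : R) : Prop :=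
  forall eps, eps > 0 -> exists delta, delta > 0 /\ forall s u, 0 <= s <= 1 ->
    Rabs (s - s0) < delta -> Rabs (u - u0) < delta -> Rabs (F s u - F s0 u0) < eps.

Module Continuity.
Import Coquelicot.Coquelicot.

Lemma cont_plus (f g : R * R -> R) z :
  continuous f z -> continuous g z -> continuous (fun x => f x + g x) z.
Proof. exact (continuous_plus f g z). Qed.

Lemma cont_minus (f g : R * R -> R) z :
  continuous f z -> continuous g z -> continuous (fun x => f x - g x) z.
Proof. intros Hf Hg. exact (continuous_plus f (fun x => - g x) z Hf (continuous_opp g z Hg)). Qed.

Lemma cont_mult (f g : R * R -> R) z :
  continuous f z -> continuous g z -> continuous (fun x => f x * g x) z.
Proof. exact (continuous_mult f g z). Qed.

Lemma cont_inv (g : R * R -> R) z :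
  continuous g z -> g z <> 0 -> continuous (fun x => / g x) z.
Proof. intros Hg Hz. exact (continuous_comp g Rinv z Hg (continuous_Rinv _ Hz)). Qed.

Lemma cont_div (f g : R * R -> R) z :
  continuous f z -> continuous g z -> g z <> 0 -> continuous (fun x => f x / g x) z.
Proof. intros Hf Hg Hz. exact (cont_mult f (fun x => / g x) z Hf (cont_inv g z Hg Hz)). Qed.

Lemma cont_Rmax (f g : R * R -> R) z :
  continuous f z -> continuous g z -> continuous (fun x => Rmax (f x) (g x)) z.
Proof.
  intros Hf Hg.
  apply continuous_ext with (f := fun x => (f x + g x + Rabs (f x - g x)) / 2).
  { intro x. unfold Rmax, Rabs; destruct Rle_dec; destruct Rcase_abs; lra. }
  apply cont_div; [|apply continuous_const | simpl; lra].
  apply cont_plus; [exact (cont_plus f g z Hf Hg)|].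
  exact (continuous_comp (fun x => f x - g x) Rabs z (cont_minus f g z Hf Hg) (continuous_Rabs _)).
Qed.

Lemma cont_Rmin (f g : R * R -> R) z :
  continuous f z -> continuous g z -> continuous (fun x => Rmin (f x) (g x)) z.
Proof.
  intros Hf Hg.
  apply continuous_ext with (f := fun x => f x + g x - Rmax (f x) (g x)).
  { intro x. unfold Rmax, Rmin; destruct Rle_dec; lra. }
  exact (cont_minus _ _ z (cont_plus f g z Hf Hg) (cont_Rmax f g z Hf Hg)).
Qed.

(* The side conditions [_ <> 0] of divisions are left to the caller. *)
Ltac solve_continuous :=
  lazymatch goal with
  | |- continuous (fun x => Rmax (@?f x) (@?g x)) _ => apply cont_Rmax; solve_continuous
  | |- continuous (fun x => Rmin (@?f x) (@?g x)) _ => apply cont_Rmin; solve_continuous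
  | |- continuous (fun x => @?f x + @?g x) _ => apply cont_plus; solve_continuous
  | |- continuous (fun x => @?f x - @?g x) _ => apply cont_minus; solve_continuous
  | |- continuous (fun x => @?f x * @?g x) _ => apply cont_mult; solve_continuous
  | |- continuous (fun x => @?f x / @?g x) _ =>
      apply cont_div; [solve_continuous | solve_continuous | idtac]
  | |- continuous (fun x => / @?f x) _ => apply cont_inv; [solve_continuous | idtac]
  | |- continuous fst _ => apply continuous_fst
  | |- continuous snd _ => apply continuous_snd
  | |- continuous (fun x => ?c) _ => apply continuous_const
  end.

Lemma level_continuous_of_continuous (F : R -> R -> R) s0 u0 :
  continuous (fun z : R * R => F (fst z) (snd z)) (s0, u0) -> level_continuous_at F s0 u0.
Proof.
  intros H eps He.
  destruct (proj1 (filterlim_locally _ _) H (mkposreal eps He)) as [d Hd].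
  exists d; split; [apply cond_pos|].
  intros s u _ Hs Hu. exact (Hd (s, u) (conj Hs Hu)).
Qed.

Lemma unsquash_continuous v0 : -1 < v0 < 1 -> forall eps, eps > 0 -> exists delta, delta > 0 /\
  forall v, Rabs (v - v0) < delta -> Rabs (unsquash v - unsquash v0) < eps.
Proof.
  intros Hv eps He.
  assert (Hc : continuous unsquash v0).
  { assert (Hv' : Rabs v0 < 1) by (apply Rabs_def1; lra).
    apply (continuous_mult (fun v => v) (fun v => / (1 - Rabs v))); [apply continuous_id|].
    apply (continuous_comp (fun v => 1 - Rabs v) Rinv); [|apply continuous_Rinv; lra].
    apply (continuous_plus (fun _ => 1) (fun v => - Rabs v)); [apply continuous_const|].
    apply (continuous_opp (V := R_NormedModule) Rabs). apply continuous_Rabs. }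
  destruct (proj1 (filterlim_locally _ _) Hc (mkposreal eps He)) as [d Hd].
  exists d; split; [apply cond_pos | exact Hd].
Qed.

Lemma unpinch_continuous w s0 L0 : 0 <= s0 <= 1 ->
  level_continuous_at (fun s L => unpinch s w L) s0 L0.
Proof.
  intro Hs. apply level_continuous_of_continuous. unfold unpinch.
  solve_continuous; simpl; lra.
Qed.

Lemma pinch_continuous_lt1 w s0 L0 : s0 < 1 ->
  level_continuous_at (fun s L => pinch s w L) s0 L0.
Proof.
  intros Hs eps He.
  set (G := fun s L => Rmax (Rmin (/ (1 - s) * L) ((1 - 2 * s / 3) * L + s * w / 3))
                            (w - / (1 - s) * (w - L))).
  destruct (level_continuous_of_continuous G s0 L0) with (eps := eps) as [d [Hd HG]];
    [unfold G; solve_continuous; simpl; lra | exact He |].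
  exists (Rmin d (1 - s0)). split; [apply Rmin_pos; lra|].
  intros s L Hs01 H1 H2.
  pose proof (Rmin_l d (1 - s0)). pose proof (Rmin_r d (1 - s0)).
  assert (s < 1) by (apply Rabs_def2 in H1; lra).
  rewrite !pinch_lt1 by assumption. apply (HG s L); lra.
Qed.

Lemma pinch_continuous_1 w L0 : 0 < L0 < w ->
  level_continuous_at (fun s L => pinch s w L) 1 L0.
Proof.
  intros HL eps He.
  set (mid := fun s L => (1 - 2 * s / 3) * L + s * w / 3).
  destruct (level_continuous_of_continuous mid 1 L0) with (eps := eps) as [d [Hd Hmid]];
    [unfold mid; solve_continuous; simpl; lra | exact He |].
  set (M := 1 + 2 * w / (3 * L0) + 2 * w / (w - L0)).
  assert (HM1 : 2 * w / (3 * L0) * L0 = 2 * w / 3) by (field; lra).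
  assert (HM2 : 2 * w / (w - L0) * (w - L0) = 2 * w) by (field; lra).
  assert (0 < 2 * w / (3 * L0)) by (apply Rdiv_lt_0_compat; lra).
  assert (0 < 2 * w / (w - L0)) by (apply Rdiv_lt_0_compat; lra).
  exists (Rmin d (Rmin (Rmin (L0 / 2) ((w - L0) / 2)) (/ M))). split.
  { repeat apply Rmin_pos; try lra. apply Rinv_0_lt_compat; unfold M; lra. }
  intros s L Hs01 H1 H2.
  pose proof (Rmin_l d (Rmin (Rmin (L0 / 2) ((w - L0) / 2)) (/ M))).
  pose proof (Rmin_r d (Rmin (Rmin (L0 / 2) ((w - L0) / 2)) (/ M))).
  pose proof (Rmin_l (Rmin (L0 / 2) ((w - L0) / 2)) (/ M)).
  pose proof (Rmin_r (Rmin (L0 / 2) ((w - L0) / 2)) (/ M)).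
  pose proof (Rmin_l (L0 / 2) ((w - L0) / 2)). pose proof (Rmin_r (L0 / 2) ((w - L0) / 2)).
  apply Rabs_def2 in H1 as H1'. apply Rabs_def2 in H2 as H2'.
  assert (Hpinch : pinch s w L = mid s L).
  { destruct (Rlt_dec s 1) as [Hs1|Hs1]; [|rewrite (Rle_antisym s 1), pinch_1 by lra;
                                           unfold mid; field].
    assert (0 < / M) by (apply Rinv_0_lt_compat; unfold M; lra).
    assert (HkM : M < / (1 - s)).
    { rewrite <- (Rinv_inv M). apply Rinv_lt_contravar; [apply Rmult_lt_0_compat|]; lra. }
    apply pinch_middle; [lra | lra | |]; unfold M in HkM; nra. }
  rewrite Hpinch, pinch_1. replace ((L0 + w) / 3) with (mid 1 L0) by (unfold mid; field).
  apply Hmid; lra.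
Qed.

Lemma pinch_continuous w s0 L0 : 0 <= s0 <= 1 -> 0 < L0 < w ->
  level_continuous_at (fun s L => pinch s w L) s0 L0.
Proof.
  intros Hs HL. destruct (Rlt_dec s0 1) as [Hs1|Hs1].
  - exact (pinch_continuous_lt1 w s0 L0 Hs1).
  - rewrite (Rle_antisym s0 1) by lra. exact (pinch_continuous_1 w L0 HL).
Qed.

End Continuity.
Import Continuity.

Lemma dist2_fst p q : Rabs (fst p - fst q) <= dist2 p q.
Proof.
  unfold dist2. rewrite <- sqrt_Rsqr_abs. apply sqrt_le_1_alt.
  pose proof (pow2_ge_0 (snd p - snd q)). unfold Rsqr. nra.
Qed.

Lemma dist2_snd p q : Rabs (snd p - snd q) <= dist2 p q.
Proof.
  unfold dist2. rewrite <- sqrt_Rsqr_abs. apply sqrt_le_1_alt.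
  pose proof (pow2_ge_0 (fst p - fst q)). unfold Rsqr. nra.
Qed.

Lemma dist2_le_sum p q : dist2 p q <= Rabs (fst p - fst q) + Rabs (snd p - snd q).
Proof.
  unfold dist2. pose proof (Rabs_pos (fst p - fst q)). pose proof (Rabs_pos (snd p - snd q)).
  rewrite <- (sqrt_Rsqr (Rabs (fst p - fst q) + Rabs (snd p - snd q))) by lra.
  apply sqrt_le_1_alt. rewrite <- (pow2_abs (fst p - fst q)), <- (pow2_abs (snd p - snd q)).
  unfold Rsqr. nra.
Qed.

Lemma dist2_horizontal a b c : dist2 (a, c) (b, c) = Rabs (a - b).
Proof.
  unfold dist2; simpl. rewrite Rminus_diag, <- sqrt_Rsqr_abs. f_equal. unfold Rsqr; ring.
Qed.

Definition horizontal (c : R) (P : R -> Prop) (p : pt) : Prop := snd p = c /\ P (fst p).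

Section HorizontalInterval.
Variables (c : R) (P : R -> Prop).
Hypothesis P_interval : forall x z y, P x -> P y -> x <= z <= y -> P z.
Variables U V : pt -> Prop.
Hypotheses (U_open : rel_open (horizontal c P) U) (V_open : rel_open (horizontal c P) V).
Hypothesis UV_cover : forall p, horizontal c P p -> U p \/ V p.

(* The supremum of the points of [U] between [x0] and [x1] lies in [U] or in [V],
   and openness of either set contradicts disjointness. *)
Lemma horizontal_cover_meets x0 x1 : x0 <= x1 -> U (x0, c) -> V (x1, c) ->
  exists p, U p /\ V p.
Proof.
  destruct U_open as [HU1 HU2], V_open as [HV1 HV2].
  intros Hx U0 V1. apply NNPP; intro Hno.
  assert (Hdis : forall p, U p -> V p -> False) by (intros p h1 h2; apply Hno; exists p; auto).
  assert (P0 : P x0) by exact (proj2 (HU1 _ U0)).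
  assert (P1 : P x1) by exact (proj2 (HV1 _ V1)).
  set (E := fun t => x0 <= t <= x1 /\ U (t, c)).
  assert (Hb : bound E) by (exists x1; intros t [Ht _]; lra).
  destruct (completeness E Hb (ex_intro _ x0 (conj (conj (Rle_refl x0) Hx) U0)))
    as [s [Hs1 Hs2]].
  assert (Hx0s : x0 <= s) by (apply Hs1; split; [lra | exact U0]).
  assert (Hsx1 : s <= x1) by (apply Hs2; intros t [Ht _]; lra).
  assert (Ps : P s) by (apply (P_interval x0 s x1); auto).
  destruct (UV_cover (s, c) (conj eq_refl Ps)) as [Us|Vs].
  - assert (Hlt : s < x1)
      by (destruct Hsx1 as [ | ->]; [easy | exfalso; exact (Hdis _ Us V1)]).
    destruct (HU2 _ Us) as [e [He0 He1]].
    set (t := Rmin (s + e / 2) x1).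
    assert (s < t <= s + e / 2) by (unfold t; split; [apply Rmin_glb_lt | apply Rmin_l]; lra).
    assert (t <= x1) by apply Rmin_r.
    assert (Et : E t).
    { split; [lra|]. apply He1; [split; [reflexivity | apply (P_interval x0 t x1); auto; lra]|].
      rewrite dist2_horizontal, Rabs_left1 by lra. lra. }
    pose proof (Hs1 t Et). lra.
  - assert (Hlt : x0 < s)
      by (destruct Hx0s as [ | <-]; [easy | exfalso; exact (Hdis _ U0 Vs)]).
    destruct (HV2 _ Vs) as [e [He0 He1]].
    assert (exists t, E t /\ s - e < t) as [t [[Ht Ut] Hte]].
    { apply NNPP; intro Hn.
      assert (Hub : is_upper_bound E (s - e)).
      { intros t Et. apply Rnot_lt_le. intro. apply Hn. exists t; auto. }
      pose proof (Hs2 _ Hub). lra. }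
    assert (t <= s) by (apply Hs1; split; auto).
    apply (Hdis (t, c)); [exact Ut|].
    apply He1; [split; [reflexivity | apply (P_interval x0 t x1); auto]|].
    rewrite dist2_horizontal, Rabs_right by lra. lra.
Qed.

End HorizontalInterval.

Lemma horizontal_interval_connected c P :
  (forall x z y, P x -> P y -> x <= z <= y -> P z) -> connected (horizontal c P).
Proof.
  intros Hint U V HU HV Hcov [[x0 y0] U0] [[x1 y1] V1].
  destruct (proj1 HU _ U0) as [Hy0 _], (proj1 HV _ V1) as [Hy1 _]. simpl in Hy0, Hy1. subst.
  destruct (Rle_dec x0 x1) as [Hx|Hx].
  - exact (horizontal_cover_meets c P Hint U V HU HV Hcov x0 x1 Hx U0 V1).
  - destruct (horizontal_cover_meets c P Hint V U HV HU) with (x0 := x1) (x1 := x0)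
      as [p [Vp Up]]; [intros p Hp; apply or_comm, Hcov, Hp | lra | exact V1 | exact U0 |].
    exists p; auto.
Qed.

Definition lipschitz1 (f : pt -> R) : Prop := forall p q, Rabs (f p - f q) <= dist2 p q.

Lemma connected_lipschitz_side C f m p0 : connected C -> lipschitz1 f ->
  (forall q, C q -> f q <> m) -> C p0 -> f p0 < m -> forall q, C q -> f q < m.
Proof.
  intros Hc Hf Hne Hp0 Hf0 q Hq. apply Rnot_le_lt. intro Hge.
  assert (Hgt : f q > m) by (destruct Hge; [easy | exfalso; now apply (Hne q Hq)]).
  destruct (Hc (fun r => C r /\ f r < m) (fun r => C r /\ f r > m)) as [r [[_ h1] [_ h2]]].
  - split; [intros r [h _]; exact h|].
    intros r [hr hf]. exists (m - f r). split; [lra|]. intros t Ht Hd. split; [exact Ht|].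
    pose proof (Hf r t) as Hrt. rewrite Rabs_minus_sym in Hrt.
    pose proof (Rle_abs (f t - f r)). lra.
  - split; [intros r [h _]; exact h|].
    intros r [hr hf]. exists (f r - m). split; [lra|]. intros t Ht Hd. split; [exact Ht|].
    pose proof (Hf r t). pose proof (Rle_abs (f r - f t)). lra.
  - intros r Hr. destruct (Rtotal_order (f r) m) as [h|[h|h]]; auto.
    exfalso; exact (Hne r Hr h).
  - exists p0; auto.
  - exists q; auto.
  - lra.
Qed.

Lemma closure_lipschitz_le C f m p : lipschitz1 f ->
  (forall q, C q -> f q < m) -> closure2 C p -> f p <= m.
Proof.
  intros Hf H Hp. apply Rnot_lt_le. intro Hlt.
  destruct (Hp (f p - m) ltac:(lra)) as [q [Cq Hd]].
  pose proof (H q Cq). pose proof (Hf p q). pose proof (Rle_abs (f p - f q)). lra.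
Qed.

Lemma squash_fst_lipschitz : lipschitz1 (fun q => squash (fst q)).
Proof. intros p q. pose proof (squash_lipschitz (fst p) (fst q)). pose proof (dist2_fst p q). lra. Qed.

Lemma opp_squash_fst_lipschitz : lipschitz1 (fun q => - squash (fst q)).
Proof.
  intros p q. replace (- squash (fst p) - - squash (fst q)) with (- (squash (fst p) - squash (fst q)))
    by ring.
  rewrite Rabs_Ropp. exact (squash_fst_lipschitz p q).
Qed.

Lemma level_continuous_in_gap (F G : R -> R -> R) s0 u0 a b : a < u0 < b ->
  (forall s u, a < u < b -> F s u = a + G s (u - a)) ->
  level_continuous_at G s0 (u0 - a) -> level_continuous_at F s0 u0.
Proof.
  intros Hu0 HF HG eps He. destruct (HG eps He) as [d [Hd Hdd]].
  exists (Rmin d (Rmin (u0 - a) (b - u0))). split; [repeat apply Rmin_pos; lra|].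
  intros s u Hs H1 H2.
  pose proof (Rmin_l d (Rmin (u0 - a) (b - u0))). pose proof (Rmin_r d (Rmin (u0 - a) (b - u0))).
  pose proof (Rmin_l (u0 - a) (b - u0)). pose proof (Rmin_r (u0 - a) (b - u0)).
  assert (Hu : a < u < b) by (apply Rabs_def2 in H2; lra).
  rewrite (HF s u Hu), (HF s0 u0 Hu0).
  replace (a + G s (u - a) - (a + G s0 (u0 - a))) with (G s (u - a) - G s0 (u0 - a)) by ring.
  apply Hdd; [exact Hs | lra |]. replace (u - a - (u0 - a)) with (u - u0) by ring. lra.
Qed.

Definition level_map (F : R -> R -> R) (p : pt) : pt :=
  (unsquash (F (snd p) (squash (fst p))), snd p).

Lemma level_map_continuous (D : pt -> Prop) (F : R -> R -> R) :
  (forall p, D p -> 0 <= snd p <= 1 /\ -1 < F (snd p) (squash (fst p)) < 1 /\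
                    level_continuous_at F (snd p) (squash (fst p))) ->
  continuous_on D (level_map F).
Proof.
  intros HD p0 Hp0 eps He. destruct (HD p0 Hp0) as [_ [Hw0 HF]].
  set (w0 := F (snd p0) (squash (fst p0))) in *.
  destruct (unsquash_continuous w0 Hw0 (eps / 2) ltac:(lra)) as [eta [Heta Hunsq]].
  destruct (HF eta Heta) as [d [Hd Hdd]].
  exists (Rmin d (eps / 2)). split; [apply Rmin_pos; lra|].
  intros q Hq Hdist. pose proof (Rmin_l d (eps / 2)). pose proof (Rmin_r d (eps / 2)).
  destruct (HD q Hq) as [Hq01 _].
  pose proof (dist2_fst p0 q). pose proof (dist2_snd p0 q).
  pose proof (squash_lipschitz (fst q) (fst p0)) as Hsq. rewrite (Rabs_minus_sym (fst q)) in Hsq.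
  assert (Hclose : Rabs (F (snd q) (squash (fst q)) - w0) < eta).
  { apply Hdd; [exact Hq01 | rewrite Rabs_minus_sym; lra | lra]. }
  apply Hunsq in Hclose.
  pose proof (dist2_le_sum (level_map F p0) (level_map F q)) as Hsum.
  unfold level_map in *; simpl in Hsum. unfold w0 in Hclose. rewrite Rabs_minus_sym in Hclose. lra.
Qed.

Section Construction.
Variable S : pt -> Prop.
Hypothesis S_lower : forall x y, 0 <= y < 1 -> S (x, y).
Hypothesis S_strip : forall p, S p -> strip p.
Hypothesis S_open : rel_open strip S.

Definition top_complement (v : R) : Prop := ~ (-1 < v < 1 /\ S (unsquash v, 1)).

Local Notation K := top_complement.
Local Notation lo := (gap_lo top_complement).
Local Notation hi := (gap_hi top_complement).

Lemma top_complement_closed : closedR K.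
Proof.
  intros v Kv. apply NNPP in Kv. destruct Kv as [Hv HS].
  destruct (proj2 S_open _ HS) as [eps [He Heps]].
  destruct (unsquash_continuous v Hv eps He) as [d [Hd Hdd]].
  exists (Rmin d (Rmin (1 - v) (1 + v))). split; [repeat apply Rmin_pos; lra|].
  intros z Hz Kz. apply Kz.
  pose proof (Rmin_l d (Rmin (1 - v) (1 + v))). pose proof (Rmin_r d (Rmin (1 - v) (1 + v))).
  pose proof (Rmin_l (1 - v) (1 + v)). pose proof (Rmin_r (1 - v) (1 + v)).
  pose proof (Rabs_def2 _ _ Hz).
  split; [lra|]. apply Heps; [unfold strip; simpl; lra|].
  rewrite dist2_horizontal, Rabs_minus_sym. apply Hdd. lra.
Qed.

Lemma top_complement_below u : exists v, v <= u /\ K v.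
Proof.
  exists (Rmin u (-1)). split; [apply Rmin_l|]. pose proof (Rmin_r u (-1)). unfold K; lra.
Qed.

Lemma top_complement_above u : exists v, u <= v /\ K v.
Proof.
  exists (Rmax u 1). split; [apply Rmax_l|]. pose proof (Rmax_r u 1). unfold K; lra.
Qed.

Let K_gap_in := gap_in_K K top_complement_below top_complement_above.
Let K_gap_notin := gap_notin_K K top_complement_closed top_complement_below top_complement_above.
Let K_gap_free := gap_free K top_complement_below top_complement_above.
Let K_gap_same := gap_same K top_complement_closed top_complement_below top_complement_above.
Let K_gap_outside := gap_outside K top_complement_below top_complement_above.

Lemma top_gap_bounds u : -1 <= u <= 1 -> -1 <= lo u /\ hi u <= 1.
Proof.
  intro Hu. split.
  - apply (le_gap_lo K top_complement_below); [unfold K; lra | lra].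
  - apply (gap_hi_le K top_complement_above); [unfold K; lra | lra].
Qed.

Definition slide (s u : R) : R := lo u + pinch s (hi u - lo u) (u - lo u).
Definition unslide (s v : R) : R := lo v + unpinch s (hi v - lo v) (v - lo v).

Definition middle_third (v t : R) : Prop := (2 * lo v + hi v) / 3 < t < (lo v + 2 * hi v) / 3.
Definition in_middle_third (v : R) : Prop := ~ K v /\ middle_third v v.

Lemma slide_fixed s u : K u -> s < 1 -> slide s u = u.
Proof.
  intros Ku Hs. unfold slide. destruct (K_gap_in u Ku) as [-> ->].
  rewrite Rminus_diag, pinch_zero_width by exact Hs. ring.
Qed.

Lemma unslide_fixed s v : K v -> 0 <= s <= 1 -> unslide s v = v.
Proof.
  intros Kv Hs. unfold unslide. destruct (K_gap_in v Kv) as [-> ->].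
  rewrite Rminus_diag, unpinch_zero_width by exact Hs. ring.
Qed.

Lemma slide_in_gap s u : ~ K u -> 0 <= s <= 1 -> lo u < slide s u < hi u.
Proof.
  intros Ku Hs. pose proof (K_gap_notin u Ku). unfold slide.
  pose proof (pinch_inside s (hi u - lo u) (u - lo u) Hs ltac:(lra)). lra.
Qed.

Lemma unslide_in_gap s v : ~ K v -> 0 <= s < 1 -> lo v < unslide s v < hi v.
Proof.
  intros Kv Hs. pose proof (K_gap_notin v Kv). unfold unslide.
  pose proof (unpinch_inside s (hi v - lo v) (v - lo v) Hs ltac:(lra)). lra.
Qed.

Lemma slide_range s u : 0 <= s <= 1 -> (s < 1 \/ ~ K u) -> -1 < u < 1 -> -1 < slide s u < 1.
Proof.
  intros Hs Hc Hu. destruct (classic (K u)) as [Ku|Ku].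
  - destruct Hc as [Hc|Hc]; [rewrite slide_fixed by assumption; exact Hu | contradiction].
  - pose proof (slide_in_gap s u Ku Hs). pose proof (top_gap_bounds u ltac:(lra)). lra.
Qed.

Lemma unslide_range s v : 0 <= s <= 1 -> (s < 1 \/ in_middle_third v) -> -1 < v < 1 ->
  -1 < unslide s v < 1.
Proof.
  intros Hs Hc Hv. destruct (classic (K v)) as [Kv|Kv]; [rewrite unslide_fixed; assumption|].
  pose proof (top_gap_bounds v ltac:(lra)). pose proof (K_gap_notin v Kv).
  destruct (Rlt_dec s 1) as [Hs1|Hs1]; [pose proof (unslide_in_gap s v Kv ltac:(lra)); lra|].
  destruct Hc as [Hc|[_ Hm]]; [lra|]. unfold middle_third in Hm.
  unfold unslide. rewrite (Rle_antisym s 1), unpinch_1_middle by lra. lra.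
Qed.

Lemma unslide_slide s u : 0 <= s <= 1 -> (s < 1 \/ ~ K u) -> unslide s (slide s u) = u.
Proof.
  intros Hs Hc. destruct (classic (K u)) as [Ku|Ku].
  - destruct Hc as [Hc|Hc]; [|contradiction].
    rewrite slide_fixed by assumption. apply unslide_fixed; assumption.
  - pose proof (K_gap_notin u Ku).
    unfold unslide. destruct (K_gap_same u (slide s u) (slide_in_gap s u Ku Hs)) as [-> ->].
    unfold slide.
    replace (lo u + pinch s (hi u - lo u) (u - lo u) - lo u) with (pinch s (hi u - lo u) (u - lo u))
      by ring.
    rewrite unpinch_pinch by lra. ring.
Qed.

Lemma slide_unslide s v : 0 <= s < 1 -> slide s (unslide s v) = v.
Proof.
  intros Hs. destruct (classic (K v)) as [Kv|Kv].
  - rewrite unslide_fixed by (assumption || lra). apply slide_fixed; [assumption | lra].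
  - unfold slide. destruct (K_gap_same v (unslide s v) (unslide_in_gap s v Kv Hs)) as [-> ->].
    unfold unslide.
    replace (lo v + unpinch s (hi v - lo v) (v - lo v) - lo v)
      with (unpinch s (hi v - lo v) (v - lo v)) by ring.
    rewrite pinch_unpinch by exact Hs. ring.
Qed.

Lemma slide_level0 u : slide 0 u = u.
Proof. unfold slide. rewrite pinch_level0. ring. Qed.

Lemma slide_1 u : slide 1 u = (lo u + hi u + u) / 3.
Proof. unfold slide. rewrite pinch_1. field. Qed.

Lemma slide_near_K s u z : 0 <= s < 1 -> K z -> Rabs (slide s u - z) <= / (1 - s) * Rabs (u - z).
Proof.
  intros Hs Kz. destruct (inv_one_minus s Hs) as [Hk1 Hk2].
  destruct (classic (K u)) as [Ku|Ku].
  - rewrite slide_fixed by (assumption || lra). pose proof (Rabs_pos (u - z)). nra.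
  - pose proof (K_gap_notin u Ku).
    destruct (pinch_bounds s (hi u - lo u) (u - lo u) Hs ltac:(lra)) as [P1 [P2 [P3 P4]]].
    unfold slide. set (P := pinch s (hi u - lo u) (u - lo u)) in *. set (k := / (1 - s)) in *.
    destruct (K_gap_outside u z Kz) as [Hz|Hz].
    + rewrite (Rabs_right (lo u + P - z)), (Rabs_right (u - z)) by lra.
      assert (k * (lo u - z) >= lo u - z) by nra. nra.
    + rewrite (Rabs_left1 (lo u + P - z)), (Rabs_left1 (u - z)) by lra.
      assert (k * (z - hi u) >= z - hi u) by nra. nra.
Qed.

Lemma unslide_near_K s v z : 0 <= s <= 1 -> K z -> Rabs (unslide s v - z) <= 3 * Rabs (v - z).
Proof.
  intros Hs Kz. destruct (classic (K v)) as [Kv|Kv].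
  - rewrite unslide_fixed by assumption. pose proof (Rabs_pos (v - z)). lra.
  - pose proof (K_gap_notin v Kv).
    destruct (unpinch_bounds s (hi v - lo v) (v - lo v) Hs ltac:(lra)) as [P1 [P2 [P3 P4]]].
    unfold unslide. set (P := unpinch s (hi v - lo v) (v - lo v)) in *.
    destruct (K_gap_outside v z Kz) as [Hz|Hz].
    + rewrite (Rabs_right (lo v + P - z)), (Rabs_right (v - z)) by lra. lra.
    + rewrite (Rabs_left1 (lo v + P - z)), (Rabs_left1 (v - z)) by lra. lra.
Qed.

Lemma slide_continuous s0 u0 : 0 <= s0 <= 1 -> (s0 < 1 \/ ~ K u0) -> level_continuous_at slide s0 u0.
Proof.
  intros Hs Hc. destruct (classic (K u0)) as [Ku|Ku].
  - destruct Hc as [Hc|Hc]; [|contradiction].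
    intros eps He. rewrite (slide_fixed s0 u0 Ku Hc).
    exists (Rmin ((1 - s0) / 2) (eps * (1 - s0) / 4)).
    split; [apply Rmin_pos; [lra | apply Rdiv_lt_0_compat; nra]|].
    intros s u Hs01 H1 H2.
    pose proof (Rmin_l ((1 - s0) / 2) (eps * (1 - s0) / 4)).
    pose proof (Rmin_r ((1 - s0) / 2) (eps * (1 - s0) / 4)).
    apply Rabs_def2 in H1.
    pose proof (slide_near_K s u u0 ltac:(lra) Ku).
    assert (Hk : / (1 - s) <= / ((1 - s0) / 2)) by (apply Rinv_le_contravar; lra).
    assert (Hbound : / (1 - s) * Rabs (u - u0) <= / ((1 - s0) / 2) * (eps * (1 - s0) / 4)).
    { apply Rmult_le_compat; [left; apply Rinv_0_lt_compat; lra | apply Rabs_pos | exact Hk | lra]. }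
    replace (/ ((1 - s0) / 2) * (eps * (1 - s0) / 4)) with (eps / 2) in Hbound by (field; lra).
    lra.
  - pose proof (K_gap_notin u0 Ku) as Hgap.
    apply (level_continuous_in_gap slide (fun s L => pinch s (hi u0 - lo u0) L) s0 u0 (lo u0) (hi u0));
      [exact Hgap | | apply pinch_continuous; lra].
    intros s u Hu. unfold slide. destruct (K_gap_same u0 u Hu) as [-> ->]. reflexivity.
Qed.

Lemma unslide_continuous s0 v0 : 0 <= s0 <= 1 -> level_continuous_at unslide s0 v0.
Proof.
  intros Hs. destruct (classic (K v0)) as [Kv|Kv].
  - intros eps He. rewrite (unslide_fixed s0 v0 Kv Hs).
    exists (eps / 4). split; [lra|].
    intros s v Hs01 _ H2. pose proof (unslide_near_K s v v0 Hs01 Kv). lra.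
  - apply (level_continuous_in_gap unslide (fun s L => unpinch s (hi v0 - lo v0) L) s0 v0
             (lo v0) (hi v0)); [exact (K_gap_notin v0 Kv) | | apply unpinch_continuous; exact Hs].
    intros s v Hv. unfold unslide. destruct (K_gap_same v0 v Hv) as [-> ->]. reflexivity.
Qed.

Lemma S_iff p : S p <-> 0 <= snd p <= 1 /\ (snd p < 1 \/ ~ K (squash (fst p))).
Proof.
  destruct p as [x y]; simpl. split.
  - intro H. split; [exact (S_strip _ H)|].
    destruct (Rlt_dec y 1) as [|Hy]; [now left | right].
    replace y with 1 in H by (pose proof (S_strip _ H) as Hs; unfold strip in Hs; simpl in Hs; lra).
    intros Kx. apply Kx. split; [apply squash_range | rewrite unsquash_squash; exact H].
  - intros [Hy [Hy1 | Kx]]; [apply S_lower; lra|].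
    destruct (Rlt_dec y 1); [apply S_lower; lra|]. replace y with 1 by lra.
    apply NNPP in Kx. destruct Kx as [_ H]. rewrite unsquash_squash in H. exact H.
Qed.

Definition compress : pt -> pt := level_map slide.
Definition decompress : pt -> pt := level_map unslide.
Definition compressed (q : pt) : Prop := exists p, S p /\ compress p = q.

Lemma decompress_compress p : S p -> decompress (compress p) = p.
Proof.
  intro H. destruct (proj1 (S_iff p) H) as [H1 H2].
  destruct p as [x y]. unfold decompress, compress, level_map; simpl in *.
  rewrite squash_unsquash by exact (slide_range y (squash x) H1 H2 (squash_range x)).
  rewrite unslide_slide, unsquash_squash by assumption. reflexivity.
Qed.

Lemma compress_in_S p : S p -> S (compress p).
Proof.
  intro H. destruct (proj1 (S_iff p) H) as [H1 H2]. apply S_iff.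
  unfold compress, level_map; simpl. split; [exact H1|].
  destruct H2 as [H2|H2]; [now left | right].
  rewrite squash_unsquash by exact (slide_range _ _ H1 (or_intror H2) (squash_range _)).
  apply (K_gap_free (squash (fst p))). exact (slide_in_gap _ _ H2 H1).
Qed.

Lemma compressed_in_S q : compressed q -> S q.
Proof. intros [p [Hp <-]]. exact (compress_in_S p Hp). Qed.

Lemma compressed_lower x y : 0 <= y < 1 -> compressed (x, y).
Proof.
  intro Hy. exists (decompress (x, y)). split.
  - apply S_lower. exact Hy.
  - unfold compress, decompress, level_map; simpl.
    rewrite squash_unsquash by (apply unslide_range; [lra | now left | apply squash_range]).
    rewrite slide_unslide, unsquash_squash by exact Hy. reflexivity.
Qed.

Lemma compressed_top x : compressed (x, 1) <-> in_middle_third (squash x).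
Proof.
  split.
  - intros [[x0 y0] [Hp Hq]]. destruct (proj1 (S_iff _) Hp) as [H1 H2].
    unfold compress, level_map in Hq; simpl in *. injection Hq as Hx Hy. subst y0.
    destruct H2 as [H2|H2]; [lra|].
    pose proof (slide_in_gap 1 (squash x0) H2 ltac:(lra)) as Hin.
    pose proof (K_gap_notin _ H2).
    rewrite <- Hx, squash_unsquash by exact (slide_range 1 _ H1 (or_intror H2) (squash_range _)).
    destruct (K_gap_same _ _ Hin) as [HA HB]. split; [exact (K_gap_free _ _ Hin)|].
    unfold middle_third. rewrite HA, HB, slide_1. lra.
  - intros [Kv Hm]. set (v := squash x) in *. unfold middle_third in Hm.
    set (z := 3 * v - lo v - hi v).
    pose proof (K_gap_notin v Kv).
    assert (Hz : lo v < z < hi v) by (unfold z; lra).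
    destruct (K_gap_same v z Hz) as [HA HB].
    pose proof (top_gap_bounds v ltac:(pose proof (squash_range x); unfold v; lra)).
    exists (unsquash z, 1). split.
    + apply S_iff. simpl. split; [lra | right].
      rewrite squash_unsquash by lra. exact (K_gap_free v z Hz).
    + unfold compress, level_map; simpl. rewrite squash_unsquash by lra.
      rewrite slide_1, HA, HB. replace ((lo v + hi v + z) / 3) with v by (unfold z; field).
      unfold v. rewrite unsquash_squash. reflexivity.
Qed.

Lemma compressed_iff q : compressed q -> 0 <= snd q <= 1 /\ (snd q < 1 \/ in_middle_third (squash (fst q))).
Proof.
  intro H. destruct (proj1 (S_iff q) (compressed_in_S q H)) as [H1 _]. split; [exact H1|].
  destruct (Rlt_dec (snd q) 1); [now left | right].
  destruct q as [x y]; simpl in *. replace y with 1 in H by lra. apply compressed_top, H.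
Qed.

Lemma compress_homeomorphism : homeomorphism S compressed compress.
Proof.
  split; [intros p Hp; exists p; auto|].
  exists decompress. split; [|split; [|split; [|split]]].
  - intros q [p [Hp <-]]. rewrite decompress_compress; assumption.
  - exact decompress_compress.
  - intros q [p [Hp <-]]. rewrite decompress_compress; [reflexivity | assumption].
  - apply level_map_continuous. intros p Hp. destruct (proj1 (S_iff p) Hp) as [H1 H2].
    split; [exact H1|]. split; [exact (slide_range _ _ H1 H2 (squash_range _))|].
    exact (slide_continuous _ _ H1 H2).
  - apply level_map_continuous. intros q Hq. destruct (compressed_iff q Hq) as [H1 H2].
    split; [exact H1|]. split; [exact (unslide_range _ _ H1 H2 (squash_range _))|].
    exact (unslide_continuous _ _ H1).
Qed.

Definition top_edge (q : pt) : Prop := compressed q /\ snd q = 1.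

Lemma top_edge_middle p : top_edge p -> in_middle_third (squash (fst p)).
Proof. intros [H1 H2]. destruct p as [x y]; simpl in *. subst. apply compressed_top, H1. Qed.

Lemma middle_third_not_edge z u : in_middle_third z -> lo u < hi u ->
  z <> (2 * lo u + hi u) / 3 /\ z <> (lo u + 2 * hi u) / 3.
Proof.
  intros [_ Hm] Hab. unfold middle_third in Hm.
  split; intro Hz; assert (Hin : lo u < z < hi u) by lra;
    destruct (K_gap_same u z Hin) as [HA HB]; rewrite HA, HB in Hm; lra.
Qed.

(* Along a connected set the squashed abscissa cannot cross the edges of a middle
   third, because no point of the top edge lies over them. *)
Lemma top_component_middle_third C p0 : component top_edge C -> C p0 ->
  forall q, C q <-> horizontal 1 (fun x => middle_third (squash (fst p0)) (squash x)) q.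
Proof.
  intros [_ [HCT [Hconn Hmax]]] Hp0.
  set (v0 := squash (fst p0)).
  destruct (top_edge_middle p0 (HCT p0 Hp0)) as [Kv0 Hm0]. fold v0 in Kv0, Hm0.
  unfold middle_third in Hm0. pose proof (K_gap_notin v0 Kv0) as Hgap.
  assert (Hup : forall q, C q -> squash (fst q) < (lo v0 + 2 * hi v0) / 3).
  { apply (connected_lipschitz_side C _ _ p0 Hconn squash_fst_lipschitz); cbv beta;
      [|exact Hp0 | fold v0; lra].
    intros q Hq. apply (middle_third_not_edge (squash (fst q)) v0);
      [apply top_edge_middle, HCT, Hq | lra]. }
  assert (Hlow : forall q, C q -> - squash (fst q) < - ((2 * lo v0 + hi v0) / 3)).
  { apply (connected_lipschitz_side C _ _ p0 Hconn opp_squash_fst_lipschitz); cbv beta;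
      [|exact Hp0 | fold v0; lra].
    intros q Hq Heq. apply (proj1 (middle_third_not_edge (squash (fst q)) v0
      (top_edge_middle q (HCT q Hq)) ltac:(lra))). lra. }
  intro q. split.
  - intro Hq. split; [exact (proj2 (HCT q Hq))|].
    pose proof (Hlow q Hq). pose proof (Hup q Hq). unfold middle_third. lra.
  - intro Hq. apply (Hmax (horizontal 1 (fun x => middle_third v0 (squash x)))); [| | | exact Hq].
    + apply horizontal_interval_connected. unfold middle_third.
      intros x z y Hx Hy Hxz. pose proof (squash_le x z). pose proof (squash_le z y). lra.
    + intros [x y] [Hy Hx]. simpl in Hy, Hx. subst y. split; [|reflexivity].
      apply compressed_top. unfold middle_third in Hx.
      assert (Hz : lo v0 < squash x < hi v0) by lra.
      destruct (K_gap_same v0 _ Hz) as [HA HB].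
      split; [exact (K_gap_free v0 _ Hz)|]. unfold middle_third. rewrite HA, HB. lra.
    + exists p0. split; [|exact Hp0].
      split; [exact (proj2 (HCT p0 Hp0)) | exact Hm0].
Qed.

Lemma top_closure_middle_third C v p :
  (forall q, C q <-> horizontal 1 (fun x => middle_third v (squash x)) q) -> closure2 C p ->
  (2 * lo v + hi v) / 3 <= squash (fst p) <= (lo v + 2 * hi v) / 3.
Proof.
  intros HC Hp. split.
  - enough (- squash (fst p) <= - ((2 * lo v + hi v) / 3)) by lra.
    apply (closure_lipschitz_le C _ _ p opp_squash_fst_lipschitz); [|exact Hp].
    intros q Hq. apply HC in Hq as [_ Hq]. unfold middle_third in Hq. lra.
  - apply (closure_lipschitz_le C _ _ p squash_fst_lipschitz); [|exact Hp].
    intros q Hq. apply HC in Hq as [_ Hq]. exact (proj2 Hq).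
Qed.

Lemma top_component_bounded C : component top_edge C -> bounded2 (closure2 C).
Proof.
  intro HC. pose proof HC as [[p0 Hp0] [HCT _]].
  pose proof (top_component_middle_third C p0 HC Hp0) as HI.
  set (v0 := squash (fst p0)) in *.
  destruct (top_edge_middle p0 (HCT p0 Hp0)) as [Kv0 _]. fold v0 in Kv0.
  pose proof (K_gap_notin v0 Kv0).
  pose proof (top_gap_bounds v0 ltac:(pose proof (squash_range (fst p0)); unfold v0; lra)).
  set (c := Rmax (Rabs ((2 * lo v0 + hi v0) / 3)) (Rabs ((lo v0 + 2 * hi v0) / 3))).
  assert (Hc1 : c < 1) by (unfold c; apply Rmax_lub_lt; apply Rabs_def1; lra).
  exists (c / (1 - c) + 2). intros p Hp.
  assert (Habs : Rabs (squash (fst p)) <= c).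
  { pose proof (top_closure_middle_third C v0 p HI Hp).
    pose proof (Rle_abs ((lo v0 + 2 * hi v0) / 3)).
    pose proof (Rle_abs (- ((2 * lo v0 + hi v0) / 3))) as Hl. rewrite Rabs_Ropp in Hl.
    pose proof (Rmax_l (Rabs ((2 * lo v0 + hi v0) / 3)) (Rabs ((lo v0 + 2 * hi v0) / 3))).
    pose proof (Rmax_r (Rabs ((2 * lo v0 + hi v0) / 3)) (Rabs ((lo v0 + 2 * hi v0) / 3))).
    unfold c. apply Rabs_le. split; lra. }
  pose proof (abs_le_of_squash (fst p) c Habs Hc1) as Hfst.
  destruct (Hp 1 ltac:(lra)) as [q [Cq Hd]].
  pose proof (dist2_snd p q) as Hsnd.
  pose proof (Rabs_triang_inv (snd p) (snd q)) as Htri.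
  rewrite (proj2 (HCT q Cq)) in Hsnd, Htri. rewrite Rabs_R1 in Htri.
  pose proof (dist2_le_sum (0, 0) p) as Hsum. simpl in Hsum.
  rewrite !Rminus_0_l, !Rabs_Ropp in Hsum. lra.
Qed.

Lemma top_component_closures_disjoint C1 C2 : component top_edge C1 -> component top_edge C2 ->
  (exists p, closure2 C1 p /\ closure2 C2 p) -> forall q, C1 q <-> C2 q.
Proof.
  intros H1 H2 [p [Hp1 Hp2]].
  pose proof H1 as [[p1 Hq1] [HCT1 _]]. pose proof H2 as [[p2 Hq2] [HCT2 _]].
  pose proof (top_component_middle_third C1 p1 H1 Hq1) as HI1.
  pose proof (top_component_middle_third C2 p2 H2 Hq2) as HI2.
  set (v1 := squash (fst p1)) in *. set (v2 := squash (fst p2)) in *.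
  assert (Hin : forall C v, (forall q, C q <-> horizontal 1 (fun x => middle_third v (squash x)) q) ->
             ~ K v -> closure2 C p -> lo v < squash (fst p) < hi v).
  { intros C v HC Kv Hp. pose proof (K_gap_notin v Kv).
    pose proof (top_closure_middle_third C v p HC Hp). lra. }
  destruct (K_gap_same _ _ (Hin C1 v1 HI1 (proj1 (top_edge_middle p1 (HCT1 p1 Hq1))) Hp1))
    as [HA1 HB1].
  destruct (K_gap_same _ _ (Hin C2 v2 HI2 (proj1 (top_edge_middle p2 (HCT2 p2 Hq2))) Hp2))
    as [HA2 HB2].
  intro q. rewrite HI1, HI2. unfold middle_third. rewrite <- HA1, <- HB1, HA2, HB2. tauto.
Qed.

End Construction.

Theorem mainTheorem3 (S : pt -> Prop)
  (hlow : forall x y, 0 <= y < 1 -> S (x, y))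
  (hup : forall p, S p -> strip p)
  (hopen : rel_open strip S) :
  exists (S' : pt -> Prop) (h : pt -> pt),
    homeomorphism S S' h /\
    (* (1) *)
    (forall x y, 0 <= y < 1 -> S' (x, y)) /\
    (forall p, S' p -> S p) /\
    (* (2) *)
    (forall C, component (fun p => S' p /\ snd p = 1) C ->
       bounded2 (closure2 C)) /\
    (forall C1 C2,
       component (fun p => S' p /\ snd p = 1) C1 ->
       component (fun p => S' p /\ snd p = 1) C2 ->
       (exists p, closure2 C1 p /\ closure2 C2 p) ->
       forall p, C1 p <-> C2 p) /\
    (* (3) *)
    (forall x, h (x, 0) = (x, 0)) /\
    (* (4) *)
    (forall p, S p -> snd (h p) = snd p).
Proof.
  exists (compressed S), (compress S).
  split; [apply compress_homeomorphism; assumption|].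
  split; [apply compressed_lower; assumption|].
  split; [apply compressed_in_S; assumption|].
  split; [apply top_component_bounded; assumption|].
  split; [apply top_component_closures_disjoint; assumption|].
  split.
  - intro x. unfold compress, level_map; simpl. rewrite slide_level0, unsquash_squash. reflexivity.
  - reflexivity.
Qed.
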